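(* Let $t\ge2$, $n\ge1$, let $\lambda$ be a partition of length at most $tn+1$ and write $n_i=n_i(\lambda,tn+1)$. Then the following are equivalent: (a) there exists $i_0\in\{1,\dots,\lfloor t/2\rfloor\}$ such that $n_0=n$ and, for all $1\le i\le\lfloor t/2\rfloor$, $n_i+n_{t-i}=2n+1+\delta_{i_0,t/2}$ if $i=i_0$ and $n_i+n_{t-i}=2n$ otherwise; (b) the $t$-core of $\lambda$ is a $(1,0,k)$-asymmetric partition for some $1\le k\le\mathrm{rk}(\text{$t$-core of }\lambda)$.
   Context: For a partition $\lambda$ of length at most $\ell$, $\beta_i(\lambda,\ell)=\lambda_i+\ell-i$ and $n_i(\lambda,\ell)$ is the number of $\beta_j(\lambda,\ell)$ congruent to $i$ mod $t$ ($0\le i\le t-1$). The $t$-core is the usual one. Rank $\mathrm{rk}(\mu)=\max\{j:\mu_j\ge j\}$; Frobenius coordinates $(\alpha\mid\beta)$, $\alpha_i=\mu_i-i$, $\beta_i=\mu'_i-i$. For integers $z_1>z_2\ge0$ and $1\le k\le r=\mathrm{rk}(\mu)$, $\mu$ is $(z_1,z_2,k)$-asymmetric if $\mu=(\alpha_1,\dots,\alpha_r\mid\alpha_1+z_1,\dots,\widehat{\alpha_k+z_1},\dots,\alpha_r+z_1,z_2)$ for some strict partition $\alpha$ (hat = omission). *)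

From mathcomp Require Import all_boot.
Set Implicit Arguments.
Unset Strict Implicit.
Unset Printing Implicit Defensive.

(* A partition: a weakly decreasing list of positive integers
   (lambda_1 >= lambda_2 >= ... > 0).  lambda_i (1-indexed) is
   [nth 0 la i.-1]; parts beyond the length are 0. *)
Definition is_partition (la : seq nat) : bool :=
  sorted geq la && all (fun x => 0 < x) la.

Definition part (la : seq nat) (i : nat) : nat := nth 0 la i.-1.

Definition beta (la : seq nat) (l i : nat) : nat := part la i + l - i.

Definition nres (t : nat) (la : seq nat) (l r : nat) : nat :=
  count (fun j => beta la l j %% t == r) (iota 1 l).

(* cell (i,j), 0-indexed row i and column j, lies in the diagram of la *)
Definition in_diag (la : seq nat) (c : nat * nat) : bool :=
  c.2 < nth 0 la c.1.

Definition skew_cells (la mu : seq nat) : seq (nat * nat) :=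
  [seq c <- [seq (i, j) | i <- iota 0 (size la), j <- iota 0 (nth 0 la i)]
     | ~~ in_diag mu c].

Definition adj_cell (c d : nat * nat) : bool :=
  ((c.1 == d.1) && ((c.2 == d.2.+1) || (d.2 == c.2.+1))) ||
  ((c.2 == d.2) && ((c.1 == d.1.+1) || (d.1 == c.1.+1))).

Definition rim_hook_removal (t : nat) (la mu : seq nat) : Prop :=
  [/\ is_partition mu,
      (forall i, nth 0 mu i <= nth 0 la i),
      sumn la = sumn mu + t,
      (forall a b, a \in skew_cells la mu -> b \in skew_cells la mu ->
         exists p : seq (nat * nat),
           [&& path adj_cell a p, all (mem (skew_cells la mu)) p &
               last a p == b])
    & ~ (exists i j, [/\ (i, j) \in skew_cells la mu,
                         (i.+1, j) \in skew_cells la mu,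
                         (i, j.+1) \in skew_cells la mu &
                         (i.+1, j.+1) \in skew_cells la mu])].

Definition is_tcore (t : nat) (la : seq nat) : Prop :=
  ~ (exists mu, rim_hook_removal t la mu).

Inductive hooks_removed (t : nat) : seq nat -> seq nat -> Prop :=
  | hr_refl la : hooks_removed t la la
  | hr_step la mu nu :
      rim_hook_removal t la mu -> hooks_removed t mu nu -> hooks_removed t la nu.

Definition tcore_of (t : nat) (la c : seq nat) : Prop :=
  hooks_removed t la c /\ is_tcore t c.

Definition rk (mu : seq nat) : nat :=
  \max_(0 <= j < (size mu).+1 | j <= part mu j) j.

Definition conj_part (mu : seq nat) (i : nat) : nat :=
  count (fun x => i <= x) mu.

Definition frob_arm (mu : seq nat) : seq nat :=
  [seq part mu i - i | i <- iota 1 (rk mu)].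
Definition frob_leg (mu : seq nat) : seq nat :=
  [seq conj_part mu i - i | i <- iota 1 (rk mu)].

(* mu is (z1,z2,k)-asymmetric:
   mu = (alpha_1,..,alpha_r | alpha_1+z1, .., ^(alpha_k+z1), .., alpha_r+z1, z2)
   for some strict partition alpha, where r = rk mu. *)
Definition asymmetric (z1 z2 k : nat) (mu : seq nat) : Prop :=
  z2 < z1 /\ 1 <= k <= rk mu /\
  exists alpha : seq nat,
    [/\ sorted gtn alpha, size alpha = rk mu,
        frob_arm mu = alpha &
        frob_leg mu =
          rcons [seq a + z1 | a <- take k.-1 alpha ++ drop k alpha] z2].

From mathcomp Require Import all_boot zify.
Set Implicit Arguments.
Unset Strict Implicit.
Unset Printing Implicit Defensive.

(** Let [B] be the set of beta-numbers [lambda_i + l - i] of [lambda] for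
    [l = tn + 1], so that [n_r] counts the beads of [B] congruent to [r] mod [t].
    Removing a rim [t]-hook moves one bead of [B] down by [t], so [lambda] and
    its [t]-core [c] have the same [n_r].  Conversely, if a bead [x] of [c] had
    [x - t] free, sliding it down would remove a rim hook; hence the beads of [c]
    are closed under [x |-> x - t], i.e. [x] is a bead iff [x / t < n_(x mod t)].
    The arms of [c] are the beads [l + a] above position [l - 1] and its legs the
    gaps [l - 1 - b] below it, and there are as many arms as legs.  So [c] is
    [(1,0,k)]-asymmetric iff [l - 1] is a gap and every gap [l - 1 - d] is
    mirrored by a bead [l - 1 + d].  On the abacus this says [n_0 = n] and
    [n_r + n_(t-r) >= 2n] for [0 < r < t]; since [sum_r n_r = tn + 1], the
    excesses of these pair sums over [2n] add up to [2], which is (a). *)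

(** * Partitions and beta-numbers *)

Lemma geq_trans : transitive geq.
Proof. by move=> a b c /= h1 h2; apply: leq_trans h2 h1. Qed.

Lemma gtn_trans : transitive gtn.
Proof. by move=> a b c /= h1 h2; apply: ltn_trans h2 h1. Qed.

Lemma partition_nth_le la i j : is_partition la -> i <= j -> nth 0 la j <= nth 0 la i.
Proof.
case/andP=> so _ ij; case: (ltnP j (size la)) => hj; last by rewrite nth_default.
apply: (sorted_leq_nth geq_trans (fun a => leqnn a) 0 so) => //.
by rewrite inE (leq_ltn_trans ij hj).
Qed.

Lemma partition_nth_gt0 la k : is_partition la -> (0 < nth 0 la k) = (k < size la).
Proof.
case/andP=> _ /allP pos; case: (ltnP k (size la)) => hk; last by rewrite nth_default.
by rewrite pos // mem_nth.
Qed.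

Lemma partition_size_le la mu : is_partition mu ->
  (forall k, nth 0 mu k <= nth 0 la k) -> size mu <= size la.
Proof.
move=> pmu sub; case: (posnP (size mu)) => [->//|mu0].
suff : (size mu).-1 < size la by lia.
rewrite ltnNge; apply/negP => h; have := sub (size mu).-1.
by rewrite (nth_default _ h) leqNgt partition_nth_gt0 //; lia.
Qed.

Lemma nth_filter_gt0 s k : sorted geq s -> nth 0 [seq x <- s | 0 < x] k = nth 0 s k.
Proof.
elim: s k => [|a s IH] k //= hs; have hs' := path_sorted hs.
case: (posnP a) => [a0|apos]; last by case: k => [|k] //=; apply: IH.
have /allP s0 : all (geq 0) s by move: (order_path_min geq_trans hs); rewrite a0.
have -> : [seq x <- s | 0 < x] = [::].
  apply/nilP; rewrite /nilp size_filter -leqn0 leqNgt -has_count.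
  by apply/hasP => -[x /s0]; rewrite /= leqn0 => /eqP ->.
case: k => [|k] /=; first by rewrite a0.
case: (ltnP k (size s)) => hk; last by rewrite !nth_default.
by have /= := s0 _ (mem_nth 0 hk); rewrite leqn0 => /eqP ->.
Qed.

Lemma is_partition_filter_gt0 s : sorted geq s -> is_partition [seq x <- s | 0 < x].
Proof.
move=> hs; rewrite /is_partition sorted_filter ?hs //=; last exact: geq_trans.
by apply/allP => x; rewrite mem_filter => /andP[].
Qed.

Lemma sumn_nth s n : size s <= n -> sumn s = \sum_(0 <= k < n) nth 0 s k.
Proof.
elim: s n => [|a s IH] n /=; first by rewrite big1 // => k; rewrite nth_nil.
by case: n => // n hn; rewrite big_nat_recl //= (IH n).
Qed.

Definition bead (la : seq nat) (l k : nat) : nat := beta la l k.+1.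

Definition beads (la : seq nat) (l : nat) : seq nat := map (bead la l) (iota 0 l).

Lemma beadE la l k : k < l -> bead la l k = nth 0 la k + (l - k.+1).
Proof. by rewrite /bead /beta /part /=; lia. Qed.

Lemma nres_beads t la l r : nres t la l r = count (fun x => x %% t == r) (beads la l).
Proof. by rewrite /nres /beads count_map -(addn0 1) iotaDl count_map. Qed.

Lemma mem_beads la l x : (x \in beads la l) = has (fun k => bead la l k == x) (iota 0 l).
Proof. by apply/mapP/hasP => [[k hk ->]|[k hk /eqP <-]]; exists k. Qed.

Lemma size_beads la l : size (beads la l) = l.
Proof. by rewrite size_map size_iota. Qed.

Lemma bead_ltn la l j k : is_partition la -> j < k -> k < l -> bead la l k < bead la l j.
Proof.
move=> p jk kl; rewrite !beadE //; last exact: ltn_trans kl.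
by have := partition_nth_le p (ltnW jk); lia.
Qed.

Lemma bead_inj la l j k : is_partition la -> j < l -> k < l ->
  bead la l j = bead la l k -> j = k.
Proof.
move=> p jl kl e; case: (ltngtP j k) => // h.
- by have := bead_ltn p h kl; rewrite e ltnn.
- by have := bead_ltn p h jl; rewrite e ltnn.
Qed.

Lemma uniq_beads la l : is_partition la -> uniq (beads la l).
Proof.
move=> p; rewrite map_inj_in_uniq ?iota_uniq // => j k.
by rewrite !mem_iota /= !add0n; apply: bead_inj.
Qed.

Lemma telescope_strip (L M : nat -> nat) i d :
  (forall k, L k.+1 <= L k) -> (forall k, M k <= L k) ->
  (forall k, i <= k < i + d -> M k + 1 = L k.+1) ->
  \sum_(i <= k < (i + d).+1) (L k - M k) = L i + d - M (i + d).
Proof.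
move=> Ldec ML; elim: d => [|d IH] hM; first by rewrite !addn0 big_nat1.
rewrite addnS big_nat_recr /= ?IH; [|by move=> k hk; apply: hM; lia|lia].
have Li k : L (i + k) <= L i.
  by elim: k => [|k IHk]; rewrite ?addn0 // addnS (leq_trans (Ldec _) IHk).
have := hM (i + d); have := ML (i + d).+1; have := Li d; have := Li d.+1.
rewrite !addnS; lia.
Qed.

Lemma sumn_strip la mu l i j : is_partition la -> size la <= l -> size mu <= l ->
  (forall k, nth 0 mu k <= nth 0 la k) -> i <= j < l ->
  (forall k, (k < i) || (j < k) -> nth 0 mu k = nth 0 la k) ->
  (forall k, i <= k < j -> nth 0 mu k + 1 = nth 0 la k.+1) ->
  sumn la = sumn mu + (nth 0 la i + (j - i) - nth 0 mu j).
Proof.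
move=> pla sla smu sub /andP[ij jl] out mid.
rewrite (sumn_nth sla) (sumn_nth smu).
have -> : \sum_(0 <= k < l) nth 0 la k =
    \sum_(0 <= k < l) nth 0 mu k + \sum_(0 <= k < l) (nth 0 la k - nth 0 mu k).
  by rewrite -big_split; apply: eq_bigr => k _; rewrite /= subnKC.
congr (_ + _); rewrite (@big_cat_nat _ _ _ i) //=; last lia.
rewrite (@big_cat_nat _ _ _ j.+1 i) //=; last lia.
have out0 a b : (forall k, a <= k < b -> (k < i) || (j < k)) ->
    \sum_(a <= k < b) (nth 0 la k - nth 0 mu k) = 0.
  move=> hab; rewrite big1_seq // => k /andP[_]; rewrite mem_index_iota => hk.
  by rewrite out ?subnn ?hab.
rewrite (out0 0 i) ?(out0 j.+1 l) ?add0n ?addn0 => [|k|k]; try lia.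
rewrite -{1 3}(subnKC ij) telescope_strip // => [k|k hk].
  exact: partition_nth_le pla (leqnSn k).
by apply: mid; rewrite subnKC in hk.
Qed.

(** * Rim hooks *)

Lemma mem_skew_cells la mu u :
  (u \in skew_cells la mu) = (nth 0 mu u.1 <= u.2) && (u.2 < nth 0 la u.1).
Proof.
case: u => a b /=; rewrite /skew_cells mem_filter /in_diag /= -leqNgt.
case: (leqP (nth 0 mu a) b) => //= _.
apply/allpairsPdep/idP => [[x [y [_ + [-> ->]]]]|h]; first by rewrite mem_iota.
exists a, b; split => //; rewrite mem_iota //= add0n.
by case: (ltnP a (size la)) => // ha; move: h; rewrite nth_default.
Qed.

Lemma skew_path_rows_le la mu k u p : nth 0 la k.+1 <= nth 0 mu k ->
  u \in skew_cells la mu -> path adj_cell u p -> all (mem (skew_cells la mu)) p ->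
  u.1 <= k -> (last u p).1 <= k.
Proof.
move=> sep; elim: p u => [//|v p IH] [u1 u2] /= hu /andP[huv hp] /andP[hv hall] hk.
apply: IH => //; case: v huv hv {hp hall} => v1 v2; move: hu.
rewrite !mem_skew_cells /adj_cell /=.
case: (ltngtP u1 k) => [||ek] hk'; try lia; subst u1 => adj hv.
case: (leqP v1 k) => // hv1; have ev : v1 = k.+1 by lia.
by move: sep hk' hv; rewrite ev; lia.
Qed.

Section RimHook.
Variables (t : nat) (la mu : seq nat).
Hypothesis rh : rim_hook_removal t la mu.

Lemma rim_hook_le k : nth 0 mu k <= nth 0 la k.
Proof. by case: rh. Qed.

Lemma rim_hook_size : size mu <= size la.
Proof. by case: rh => pmu *; apply: partition_size_le. Qed.

Lemma rim_hook_row_gap i j k : nth 0 mu i < nth 0 la i -> nth 0 mu j < nth 0 la j ->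
  i <= k < j -> nth 0 mu k < nth 0 la k.+1.
Proof.
move=> ri rj kij; rewrite ltnNge; apply/negP => sep; case: rh => _ _ _ conn _.
have ha : (i, nth 0 mu i) \in skew_cells la mu by rewrite mem_skew_cells /= leqnn.
have hb : (j, nth 0 mu j) \in skew_cells la mu by rewrite mem_skew_cells /= leqnn.
have [p /and3P[hp hall /eqP hl]] := conn _ _ ha hb.
have := skew_path_rows_le sep ha hp hall; rewrite hl /=; lia.
Qed.

Lemma rim_hook_row_step k : is_partition la -> nth 0 la k.+1 <= nth 0 mu k + 1.
Proof.
move=> pla; rewrite leqNgt; apply/negP => big; case: rh => pmu _ _ _; apply.
have := partition_nth_le pla (leqnSn k); have := partition_nth_le pmu (leqnSn k).
by exists k, (nth 0 mu k); rewrite !mem_skew_cells /=; split; lia.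
Qed.

Lemma rim_hook_strip : is_partition la -> 0 < t -> exists i j, [/\ i <= j < size la,
    (forall k, (k < i) || (j < k) -> nth 0 mu k = nth 0 la k),
    (forall k, i <= k < j -> nth 0 mu k + 1 = nth 0 la k.+1) &
    nth 0 la i + (j - i) - nth 0 mu j = t].
Proof.
move=> pla t0; pose P k := nth 0 mu k < nth 0 la k.
have sumP : sumn la = sumn mu + t by case: rh.
have exP : exists k, P k.
  case: (boolP (has P (iota 0 (size la)))) => [/hasP[k _ hk]|/hasPn hn]; first by exists k.
  suff e : sumn la = sumn mu by move: sumP; rewrite e; lia.
  rewrite (sumn_nth (leqnn _)) (sumn_nth rim_hook_size).
  apply: eq_big_nat => k hk; apply/eqP; rewrite eqn_leq rim_hook_le /=.
  by have := hn k; rewrite mem_iota /P; lia.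
have ubP k : P k -> k <= size la.
  by rewrite /P => h; apply: ltnW; rewrite -partition_nth_gt0 //; lia.
have [i Pi mini] := ex_minnP exP; have [j Pj maxj] := ex_maxnP exP ubP.
have ij : i <= j by apply: mini.
have jl : j < size la by rewrite -partition_nth_gt0 //; move: Pj; rewrite /P; lia.
have out k : (k < i) || (j < k) -> nth 0 mu k = nth 0 la k.
  move=> hk; apply/eqP; rewrite eqn_leq rim_hook_le /= leqNgt; apply/negP => Pk.
  by have := mini k Pk; have := maxj k Pk; lia.
have mid k : i <= k < j -> nth 0 mu k + 1 = nth 0 la k.+1.
  by move=> hk; have := rim_hook_row_gap Pi Pj hk; have := rim_hook_row_step k pla; lia.
exists i, j; split; rewrite ?ij ?jl //.
have := sumn_strip pla (leqnn _) rim_hook_size rim_hook_le _ out mid.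
by rewrite ij jl sumP => /(_ isT); lia.
Qed.

End RimHook.

Lemma rim_hook_nres t la mu l r : 0 < t -> is_partition la -> size la <= l ->
  rim_hook_removal t la mu -> nres t la l r = nres t mu l r.
Proof.
move=> t0 pla sla rh; have [i [j [/andP[ij jla] out mid hook]]] := rim_hook_strip rh pla t0.
have jl : j < l by lia.
have iota_la : iota 0 l = iota 0 i ++ i :: iota i.+1 (j - i) ++ iota j.+1 (l - j.+1).
  rewrite -{1}(_ : i + (1 + (j - i + (l - j.+1))) = l) ?iotaD; last lia.
  by rewrite /= add0n addn1 (_ : i.+1 + (j - i) = j.+1) //; lia.
have iota_mu : iota 0 l = iota 0 i ++ iota i (j - i) ++ j :: iota j.+1 (l - j.+1).
  rewrite -{1}(_ : i + (j - i + (1 + (l - j.+1))) = l) ?iotaD; last lia.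
  by rewrite /= add0n subnKC // addn1.
rewrite !nres_beads /beads {1}iota_la iota_mu !map_cat !count_cat /=.
have same_below : map (bead la l) (iota 0 i) = map (bead mu l) (iota 0 i).
  by apply/eq_in_map => k; rewrite mem_iota => hk; rewrite !beadE ?out //; lia.
have same_above :
    map (bead la l) (iota j.+1 (l - j.+1)) = map (bead mu l) (iota j.+1 (l - j.+1)).
  by apply/eq_in_map => k; rewrite mem_iota => hk; rewrite !beadE ?out //; lia.
have shifted : map (bead la l) (iota i.+1 (j - i)) = map (bead mu l) (iota i (j - i)).
  rewrite -add1n iotaDl -map_comp; apply/eq_in_map => k; rewrite mem_iota => hk /=.
  by rewrite add1n !beadE; have := mid k; lia.
have slide : bead la l i = bead mu l j + t by rewrite !beadE; lia.
rewrite !map_cat !count_cat same_below same_above shifted slide modnDr.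
congr (_ + _); exact: addnCA.
Qed.

Lemma hooks_removed_nres t la c l : 0 < t -> hooks_removed t la c ->
  is_partition la -> size la <= l ->
  [/\ is_partition c, size c <= l & forall r, nres t la l r = nres t c l r].
Proof.
move=> t0; elim=> [//|{}la mu nu rh _ IH] pla sla.
have [pmu _ _ _ _] := rh.
have [pnu snu nresE] := IH pmu (leq_trans (rim_hook_size rh) sla).
by split=> // r; rewrite (rim_hook_nres _ t0 pla sla rh).
Qed.

(** * Beta-numbers of [t]-cores *)

Definition linked (s : seq (nat * nat)) (u v : nat * nat) : Prop :=
  exists p, [&& path adj_cell u p, all (mem s) p & last u p == v].

Lemma linked_refl s u : linked s u u.
Proof. by exists [::]; rewrite /= eqxx. Qed.

Lemma linked_trans s u v w : linked s u v -> linked s v w -> linked s u w.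
Proof.
move=> [p1 /and3P[h1 h2 /eqP h3]] [p2 /and3P[h4 h5 h6]]; exists (p1 ++ p2).
by rewrite cat_path all_cat last_cat h3 h1 h2 h4 h5 h6.
Qed.

Lemma linked_adj s u v : adj_cell u v -> v \in s -> linked s u v.
Proof. by move=> h1 h2; exists [:: v]; rewrite /= h1 h2 eqxx. Qed.

Lemma adj_cellC u v : adj_cell u v = adj_cell v u.
Proof. by case: u v => [a b] [c d]; rewrite /adj_cell /=; apply/idP/idP; lia. Qed.

Lemma linked_sym s u v : u \in s -> linked s u v -> linked s v u.
Proof.
move=> + [p /and3P[+ + /eqP <-]]; elim: p u => [|v' p IH] u hu /=.
  by move=> *; apply: linked_refl.
case/andP=> huv hp /andP[hv hall]; apply: linked_trans (IH v' hv hp hall) _.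
by apply: linked_adj; rewrite // adj_cellC.
Qed.

Section BeadSlide.
Variables (t l : nat) (c : seq nat) (i j y : nat).
Hypotheses (pc : is_partition c) (sc : size c <= l) (ij : i <= j) (jl : j < l)
  (bead_i : bead c l i = y + t) (bead_j : y < bead c l j)
  (bead_j1 : j.+1 < l -> bead c l j.+1 < y).

(** Slide the bead [y + t] at index [i] down to the gap [y]: the beads at
    indices [i+1 .. j] lie strictly between [y] and [y + t] and shift to
    indices [i .. j-1], and [y] takes index [j]. *)
Definition slid_row k :=
  if k < i then nth 0 c k else if k < j then (nth 0 c k.+1).-1
  else if k == j then y - (l - j.+1) else nth 0 c k.

Definition slid : seq nat := [seq x <- mkseq slid_row l | 0 < x].

Let c_decr k : nth 0 c k.+1 <= nth 0 c k.
Proof. exact: partition_nth_le pc (leqnSn k). Qed.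

Let c_tail k : l <= k -> nth 0 c k = 0.
Proof. by move=> h; rewrite nth_default //; lia. Qed.

Let c_i : nth 0 c i + (l - i.+1) = y + t.
Proof. by rewrite -beadE //; lia. Qed.

Let c_j : y < nth 0 c j + (l - j.+1).
Proof. by rewrite -beadE. Qed.

Let c_j1 : nth 0 c j.+1 + (l - j.+2) < y \/ l <= j.+1.
Proof. by case: (ltnP j.+1 l) => h; [left; rewrite -beadE // bead_j1 | right]. Qed.

Let y_ge : l - j.+1 <= y.
Proof. by case: c_j1; lia. Qed.

Let c_mid k : k <= j -> 0 < nth 0 c k.
Proof. by move=> h; apply: leq_trans (partition_nth_le pc h); have := c_j; have := y_ge; lia. Qed.

Lemma slid_row_lt k : k < i -> slid_row k = nth 0 c k.
Proof. by rewrite /slid_row => ->. Qed.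

Lemma slid_row_mid k : i <= k -> k < j -> slid_row k + 1 = nth 0 c k.+1.
Proof.
move=> h1 h2; rewrite /slid_row ltnNge h1 h2 /=.
by have := c_mid (_ : k.+1 <= j); lia.
Qed.

Lemma slid_row_j : slid_row j = y - (l - j.+1).
Proof. by rewrite /slid_row ltnNge ij ltnn eqxx. Qed.

Lemma slid_row_gt k : j < k -> slid_row k = nth 0 c k.
Proof. by move=> h; rewrite /slid_row ifF ?ifF ?ifF //; apply/negbTE; lia. Qed.

Lemma slid_row_le k : slid_row k <= nth 0 c k.
Proof.
case: (ltnP k i) => [/slid_row_lt -> //|ik]; case: (ltnP k j) => [kj|jk].
  by have := slid_row_mid ik kj; have := c_decr k; lia.
case: (ltngtP j k) => [/slid_row_gt -> //||<-]; [lia | rewrite slid_row_j; have := c_j; lia].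
Qed.

Lemma slid_row_j1 : nth 0 c j.+1 <= slid_row j.
Proof. by rewrite slid_row_j; case: c_j1 => [|/c_tail ->]; lia. Qed.

Lemma slid_row_outside k : (k < i) || (j < k) -> slid_row k = nth 0 c k.
Proof. by case/orP => [/slid_row_lt|/slid_row_gt]. Qed.

Lemma slid_row_decr k : slid_row k.+1 <= slid_row k.
Proof.
case: (boolP ((k < i) || (j < k))) => [/slid_row_outside -> |].
  exact: leq_trans (slid_row_le _) (c_decr k).
rewrite negb_or -!leqNgt => /andP[ik kj]; case: (ltngtP k j) => [{}kj||->]; last first.
- by rewrite slid_row_gt // slid_row_j1.
- lia.
have := slid_row_mid ik kj; case: (ltngtP k.+1 j) => [k1j||k1j].
- by have := slid_row_mid (leqW ik) k1j; have := c_decr k.+1; lia.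
- lia.
- by rewrite k1j slid_row_j; have := c_j; rewrite -k1j; lia.
Qed.

Lemma slid_row_succ k : nth 0 c k.+1 <= slid_row k + 1.
Proof.
case: (boolP ((k < i) || (j < k))) => [/slid_row_outside -> |]; first by have := c_decr k; lia.
rewrite negb_or -!leqNgt => /andP[ik kj]; case: (ltngtP k j) => [{}kj||->].
- by rewrite slid_row_mid.
- lia.
- by have := slid_row_j1; lia.
Qed.

Lemma slid_row_tail k : l <= k -> slid_row k = 0.
Proof. by move=> h; rewrite slid_row_gt ?c_tail //; lia. Qed.

Lemma sorted_slid_rows : sorted geq (mkseq slid_row l).
Proof.
apply: (homo_sorted (e := leq)); last exact: iota_sorted.
move=> a b /=; elim: b => [|b IH]; first by rewrite leqn0 => /eqP ->.
by rewrite leq_eqVlt => /orP[/eqP-> //|/IH]; apply: leq_trans (slid_row_decr b).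
Qed.

Lemma nth_slid k : nth 0 slid k = slid_row k.
Proof.
rewrite nth_filter_gt0 ?sorted_slid_rows //.
by case: (ltnP k l) => h; [rewrite nth_mkseq | rewrite nth_default ?size_mkseq ?slid_row_tail].
Qed.

Lemma mem_skew_slid u : (u \in skew_cells c slid) = (slid_row u.1 <= u.2 < nth 0 c u.1).
Proof. by rewrite mem_skew_cells nth_slid. Qed.

Lemma linked_row_start k z : slid_row k <= z < nth 0 c k ->
  linked (skew_cells c slid) (k, z) (k, slid_row k).
Proof.
elim: z => [|z IH] hz; first by rewrite (_ : slid_row k = 0); [apply: linked_refl | lia].
case: (eqVneq (slid_row k) z.+1) => [->|ne]; first exact: linked_refl.
apply: linked_trans (IH _); last lia.
by apply: linked_adj; rewrite ?mem_skew_slid /adj_cell /=; lia.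
Qed.

Lemma linked_row_j k z : (k, z) \in skew_cells c slid ->
  linked (skew_cells c slid) (k, z) (j, slid_row j).
Proof.
move: {2}(j - k) (erefl (j - k)) => d; elim: d k z => [|d IH] k z hd.
all: rewrite mem_skew_slid /= => hz; apply: linked_trans (linked_row_start hz) _.
all: have ik : i <= k by rewrite leqNgt; apply/negP => /slid_row_lt; lia.
all: have kj : k <= j by rewrite leqNgt; apply/negP => /slid_row_gt; lia.
  by rewrite (_ : k = j); [apply: linked_refl | lia].
have down : (k.+1, slid_row k) \in skew_cells c slid.
  by rewrite mem_skew_slid /= slid_row_decr -(slid_row_mid ik) ?addn1 //; lia.
by apply: linked_trans (linked_adj _ down) (IH _ _ _ down); rewrite ?/adj_cell /=; lia.
Qed.

Lemma slid_rim_hook : rim_hook_removal t c slid.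
Proof.
have sslid : size slid <= l.
  by rewrite size_filter (leq_trans (count_size _ _)) ?size_mkseq.
split.
- exact: is_partition_filter_gt0 sorted_slid_rows.
- by move=> k; rewrite nth_slid slid_row_le.
- rewrite (sumn_strip (i := i) (j := j) pc sc sslid).
  + rewrite nth_slid slid_row_j; have := c_i; have := y_ge.
    by have := partition_nth_le pc ij; lia.
  + by move=> k; rewrite nth_slid slid_row_le.
  + by rewrite ij jl.
  + by move=> k; rewrite nth_slid; apply: slid_row_outside.
  + by move=> k /andP[ik kj]; rewrite nth_slid slid_row_mid.
- move=> [a1 a2] [b1 b2] ha hb.
  exact: linked_trans (linked_row_j ha) (linked_sym hb (linked_row_j hb)).
- by move=> [k [z [+ _ _ +]]]; rewrite !mem_skew_slid /=; have := slid_row_succ k; lia.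
Qed.

End BeadSlide.

Lemma tcore_beads_closed t c l x : is_partition c -> size c <= l -> is_tcore t c ->
  x \in beads c l -> t <= x -> x - t \in beads c l.
Proof.
move=> pc sc core; case: (posnP t) => [-> ?|t0]; first by rewrite subn0.
rewrite mem_beads => /hasP[i]; rewrite mem_iota add0n => /andP[_ il] /eqP bead_i tx.
apply/negPn/negP; rewrite mem_beads => /hasPn gap; apply: core.
pose P k := (k < l) && (x - t < bead c l k).
have [|k /andP[kl _]|j /andP[jl bead_j] maxj] := @ex_maxnP P l.
- by exists i; rewrite /P il bead_i; lia.
- exact: ltnW.
have ij : i <= j by apply: maxj; rewrite /P il bead_i; lia.
exists (slid l c i j (x - t)); apply: slid_rim_hook => // [|j1l].
  by rewrite bead_i subnK.
have := gap j.+1; have := maxj j.+1; rewrite mem_iota /P j1l /=; lia.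
Qed.

(** * Frobenius coordinates *)

Lemma sorted_gtn_map (f : nat -> nat) a n :
  (forall i, a <= i -> i.+1 < a + n -> f i.+1 < f i) -> sorted gtn [seq f i | i <- iota a n].
Proof.
elim: n a => [|[|n] IH] a //= h; apply/andP; split; first by apply: h; lia.
by have /= := IH a.+1; apply=> i h1 h2; apply: h; lia.
Qed.

Lemma count_geq_nth s i k : 0 < i -> sorted geq s ->
  (k < count (fun x => i <= x) s) = (i <= nth 0 s k).
Proof.
move=> i0; elim: s k => [|a s IH] k /= hs; first by rewrite nth_nil; lia.
have /allP sa := order_path_min geq_trans hs.
case: (leqP i a) => hia /=; first by case: k => [|k] //=; rewrite add1n ltnS IH // (path_sorted hs).
have -> : count (fun x => i <= x) s = 0.
  by apply/eqP; rewrite -leqn0 leqNgt -has_count; apply/hasP => -[x /sa /= ? ?]; lia.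
case: k => [|k] /=; first lia.
case: (ltnP k (size s)) => hk; last by rewrite nth_default //; lia.
by have /= := sa _ (mem_nth 0 hk); lia.
Qed.

Lemma size_frob_arm c : size (frob_arm c) = rk c.
Proof. by rewrite size_map size_iota. Qed.

Lemma size_frob_leg c : size (frob_leg c) = rk c.
Proof. by rewrite size_map size_iota. Qed.

Section Rank.
Variables (c : seq nat).
Hypothesis pc : is_partition c.

Lemma leq_rk j : 0 < j -> (j <= rk c) = (j <= part c j).
Proof.
move=> j0; apply/idP/idP => h.
- apply: contraLR h; rewrite -!ltnNge => h; suff : rk c <= j.-1 by lia.
  apply/bigmax_leqP_seq => k _.
  rewrite /part => hk; case: (ltnP k j) => [|kj]; first lia.
  by move: h; rewrite /part; have := partition_nth_le pc (_ : j.-1 <= k.-1); lia.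
- apply: (bigmaxn_sup_seq j) => //; rewrite mem_index_iota /=.
  have : 0 < part c j by lia.
  by rewrite /part partition_nth_gt0 //; lia.
Qed.

Lemma frob_arm_sorted : sorted gtn (frob_arm c).
Proof.
apply: sorted_gtn_map => i h1 h2; have := leq_rk (j := i.+1) isT.
rewrite (_ : i.+1 <= rk c); last lia.
by move/esym; rewrite /part /=; have := partition_nth_le pc (leqnSn i.-1); rewrite prednK //; lia.
Qed.

Lemma conj_part_ge i : 0 < i -> i <= rk c -> i <= conj_part c i.
Proof.
move=> i0 ir; have := count_geq_nth i.-1 i0 (proj1 (andP pc)).
by rewrite /conj_part; have := leq_rk i0; rewrite ir /part => /esym ->; lia.
Qed.

Lemma frob_leg_sorted : sorted gtn (frob_leg c).
Proof.
apply: sorted_gtn_map => i h1 h2; have := conj_part_ge (i := i.+1) isT.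
have : conj_part c i.+1 <= conj_part c i by apply: sub_count => x /=; lia.
lia.
Qed.

End Rank.

Section Frobenius.
Variables (c : seq nat) (l : nat).
Hypotheses (pc : is_partition c) (sc : size c <= l).

Lemma rk_leq : rk c <= l.
Proof.
apply: leq_trans sc; apply/bigmax_leqP_seq => k; rewrite mem_index_iota; lia.
Qed.

Lemma bead_rk k : k < l -> (l <= bead c l k) = (k < rk c).
Proof. by move=> kl; rewrite beadE // (leq_rk pc (j := k.+1)) // /part /=; lia. Qed.

Lemma mem_frob_arm a : (a \in frob_arm c) = (l + a \in beads c l).
Proof.
have rl := rk_leq; rewrite mem_beads; apply/mapP/hasP => [[i]|[k]].
  rewrite mem_iota => /andP[i1 i2] ->; exists i.-1; first by rewrite mem_iota; lia.
  have := leq_rk pc i1; rewrite (_ : i <= rk c) /part; last lia.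
  by move/esym; rewrite beadE; lia.
rewrite mem_iota add0n => /andP[_ kl] /eqP e.
have : k < rk c by rewrite -bead_rk // e; lia.
by exists k.+1; [rewrite mem_iota; lia | move: e; rewrite beadE // /part /=; lia].
Qed.

Lemma frob_leg_gap i : 0 < i <= rk c ->
  conj_part c i - i < l /\ l.-1 - (conj_part c i - i) \notin beads c l.
Proof.
case/andP=> i0 ir; have ci := conj_part_ge pc i0 ir.
have cl : conj_part c i <= l by apply: leq_trans (count_size _ _) sc.
split; first lia.
rewrite mem_beads; apply/hasPn => k; rewrite mem_iota add0n => /andP[_ kl].
have := count_geq_nth k i0 (proj1 (andP pc)); rewrite -/(conj_part c i) beadE //.
by case: (ltnP k (conj_part c i)) => hk /esym h; lia.
Qed.

Lemma count_gaps : count (fun x => l.-1 - x \notin beads c l) (iota 0 l) <= rk c.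
Proof.
pose H := [seq l.-1 - bead c l k | k <- iota (rk c) (l - rk c)].
have low k : k \in iota (rk c) (l - rk c) -> k < l /\ bead c l k < l.
  by rewrite mem_iota => hk; split; [lia | rewrite ltnNge bead_rk; lia].
have uH : uniq H.
  rewrite map_inj_in_uniq ?iota_uniq // => a b /low[al ba] /low[bl bb] e.
  by apply: (bead_inj pc al bl); lia.
have beads_below : l - rk c <= count (fun x => l.-1 - x \in beads c l) (iota 0 l).
  have sub : {subset H <= [seq x <- iota 0 l | l.-1 - x \in beads c l]}.
    move=> y /mapP[k /low[kl bk] ->]; rewrite mem_filter mem_iota subKn; last lia.
    by rewrite mem_beads (introT hasP) //=; [lia | exists k; rewrite ?mem_iota].
  by have := uniq_leq_size uH sub; rewrite size_map size_iota size_filter.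
have := count_predC (fun x => l.-1 - x \in beads c l) (iota 0 l).
rewrite size_iota (@eq_count _ (predC _) (fun x => l.-1 - x \notin beads c l)) //.
by have := rk_leq; lia.
Qed.

Lemma mem_frob_leg x : (x \in frob_leg c) = (x < l) && (l.-1 - x \notin beads c l).
Proof.
pose G := [seq y <- iota 0 l | l.-1 - y \notin beads c l].
have sub : {subset frob_leg c <= G}.
  move=> y /mapP[i]; rewrite mem_iota => hi ->; have [|h1 h2] := @frob_leg_gap i; first lia.
  by rewrite mem_filter h2 mem_iota.
have uleg : uniq (frob_leg c).
  by apply: sorted_uniq (frob_leg_sorted pc) => [|y]; [exact: gtn_trans | rewrite /= ltnn].
have [|_ ->] := uniq_min_size uleg sub; last by rewrite mem_filter mem_iota andbC.
by rewrite size_frob_leg size_filter count_gaps.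
Qed.

End Frobenius.

Lemma sorted_gtn_rcons0 s : sorted gtn s -> 0 \notin s -> sorted gtn (rcons s 0).
Proof.
case: s => [//|a s] /= sas; rewrite rcons_path sas /= lt0n; apply: contra => /eqP l0.
by rewrite -l0 mem_last.
Qed.

Lemma eq_rcons_shift_rem (A L : seq nat) :
  sorted gtn A -> sorted gtn L -> size L = size A -> 0 \in L ->
  {in L, forall x, 0 < x -> x.-1 \in A} ->
  exists2 a0, a0 \in A & L = rcons [seq a + 1 | a <- rem a0 A] 0.
Proof.
move=> sA sL szL L0 LA.
have irr : irreflexive gtn by move=> x; rewrite /= ltnn.
have [uA uL] := (sorted_uniq gtn_trans irr sA, sorted_uniq gtn_trans irr sL).
have A0 : 0 < size A by rewrite -szL; case: (L) L0.
pose T := [seq x.-1 | x <- rem 0 L].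
have [a0 a0A a0T] : exists2 a0, a0 \in A & a0 \notin T.
  apply/hasP; rewrite -[has _ _]negbK -all_predC; apply/negP => /allP/= AT.
  have := uniq_leq_size uA (fun a aA => negbNE (AT a aA)).
  by rewrite size_map size_rem // szL -ltnS prednK // ltnn.
exists a0 => //; apply: (irr_sorted_eq gtn_trans irr sL).
  apply: sorted_gtn_rcons0; last by apply/mapP => -[a _]; rewrite addn1.
  rewrite sorted_map; apply: (subseq_sorted _ (rem_subseq _ _)) => [a b c|].
    by move=> /= h1 h2; apply: ltn_trans h2 h1.
  by apply: sub_sorted sA => a b /=; lia.
have LR : {subset L <= rcons [seq a + 1 | a <- rem a0 A] 0}.
  move=> x xL; rewrite mem_rcons in_cons; case: (posnP x) => [-> //|x0] /=.
  apply/mapP; exists x.-1; last lia.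
  rewrite rem_mem ?LA //; apply: contraNneq a0T => <-.
  by apply/map_f; rewrite mem_rem_uniq // inE xL -lt0n x0.
have [|_ //] := uniq_min_size uL LR.
by rewrite size_rcons size_map size_rem // prednK // szL.
Qed.

Lemma asymmetric_beadsP c l : is_partition c -> size c <= l.+1 ->
  (exists k, 1 <= k <= rk c /\ asymmetric 1 0 k c) <->
  l \notin beads c l.+1 /\
  (forall d, 0 < d <= l -> l - d \notin beads c l.+1 -> l + d \in beads c l.+1).
Proof.
move=> pc sc; have memA := mem_frob_arm pc sc; have memL := mem_frob_leg pc sc.
split=> [[k [_ [_ [_ [alpha [_ _ arm leg]]]]]]|[top gaps]].
  have legE x : (x \in frob_leg c) =
      (x == 0) || (x \in [seq a + 1 | a <- take k.-1 alpha ++ drop k alpha]).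
    by rewrite leg mem_rcons in_cons.
  split=> [|d /andP[d0 dl] gap].
    by have := memL 0; rewrite legE eqxx subn0 => /esym/andP[].
  have := memL d; rewrite legE ltnS dl gap (_ : d == 0 = false) /=; last lia.
  case/mapP=> a /[swap] -> aA; rewrite addnA addn1 -memA arm.
  by move: aA; rewrite mem_cat => /orP[/mem_take|/mem_drop].
have L0 : 0 \in frob_leg c by rewrite memL subn0 top.
have LA : {in frob_leg c, forall x, 0 < x -> x.-1 \in frob_arm c}.
  move=> x; rewrite memL ltnS => /andP[xl gap] x0.
  by rewrite memA addSnnS prednK // gaps ?x0.
have [a0 a0A legE] := eq_rcons_shift_rem (frob_arm_sorted pc) (frob_leg_sorted pc)
  (etrans (size_frob_leg c) (esym (size_frob_arm c))) L0 LA.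
have a0rk : index a0 (frob_arm c) < rk c by rewrite -(size_frob_arm c) index_mem.
exists (index a0 (frob_arm c)).+1; split; first lia.
split=> //; split; first lia.
exists (frob_arm c); split; rewrite ?(frob_arm_sorted pc) ?size_frob_arm //.
by rewrite legE remE.
Qed.

(** * Residue counts *)

Section DownClosed.
Variables (t : nat) (B : seq nat).
Hypotheses (t0 : 0 < t) (uB : uniq B) (closedB : forall x, x \in B -> t <= x -> x - t \in B).

Lemma down_closed_mulD q x : x + q * t \in B -> x \in B.
Proof.
elim: q x => [|q IH] x; first by rewrite addn0.
move=> h; apply: IH; have := closedB h; rewrite mulSn addnCA addKn; apply; lia.
Qed.

Lemma mem_down_closed x : (x \in B) = (x %/ t < count (fun y => y %% t == x %% t) B).
Proof.
rewrite -size_filter; have ex := divn_eq x t; apply/idP/idP => hx.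
- pose S := [seq x %% t + q * t | q <- iota 0 (x %/ t).+1].
  have uS : uniq S by rewrite map_inj_uniq ?iota_uniq // => a b /addnI /eqP;
    rewrite eqn_pmul2r // => /eqP.
  suff /(uniq_leq_size uS) : {subset S <= [seq y <- B | y %% t == x %% t]}.
    by rewrite size_map size_iota.
  move=> y /mapP[q]; rewrite mem_iota => /andP[_ hq] ->.
  rewrite mem_filter addnC modnMDl modn_mod eqxx /=.
  apply: (@down_closed_mulD (x %/ t - q)).
  by rewrite addnAC -mulnDl subnKC -?ex //; lia.
- apply: contraLR hx; rewrite -leqNgt => hx.
  pose S := [seq x %% t + q * t | q <- iota 0 (x %/ t)].
  suff /(uniq_leq_size (filter_uniq _ uB)) : {subset [seq y <- B | y %% t == x %% t] <= S}.
    by rewrite size_map size_iota.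
  move=> y; rewrite mem_filter => /andP[/eqP hy yB]; have ey := divn_eq y t.
  apply/mapP; exists (y %/ t); last by rewrite -hy addnC.
  rewrite mem_iota /= add0n ltnNge; apply/negP => hq; apply: (negP hx).
  apply: (@down_closed_mulD (y %/ t - x %/ t)).
  by rewrite {1}ex addnAC -mulnDl subnKC // -hy -ey.
Qed.

End DownClosed.

Lemma sum_count_mod (s : seq nat) t : 0 < t ->
  \sum_(0 <= r < t) count (fun x => x %% t == r) s = size s.
Proof.
move=> t0; elim: s => [|x s IH] /=; first by rewrite big1.
rewrite big_split /= IH -add1n; congr (_ + _).
rewrite (eq_bigr (fun r => if r == x %% t then 1 else 0)); last first.
  by move=> r _; rewrite eq_sym; case: eqP.
by rewrite -big_mkcond big_nat1_eq /= ltn_pmod.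
Qed.

Section Abacus.
Variables (t n : nat) (N : nat -> nat) (inB : pred nat).
Hypotheses (t0 : 0 < t) (memB : forall x, inB x = (x %/ t < N (x %% t))).

Lemma abacus_mem q r : r < t -> inB (q * t + r) = (q < N r).
Proof. by move=> rt; rewrite memB divnMDl // divn_small // addn0 modnMDl modn_small. Qed.

Lemma abacus_balanced : 0 < n -> ~~ inB (t * n) ->
  (forall d, 0 < d <= t * n -> ~~ inB (t * n - d) -> inB (t * n + d)) ->
  N 0 = n /\ forall r, 0 < r < t -> 2 * n <= N r + N (t - r).
Proof.
move=> n0 top mirror.
have N0n : N 0 <= n by move: top; rewrite -[t * n]addn0 mulnC abacus_mem //; lia.
have below : inB ((n - 1) * t + 0).
  apply/negPn/negP; rewrite addn0 mulnBl mul1n mulnC => gap.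
  have /mirror/(_ gap) : 0 < t <= t * n by rewrite t0 leq_pmulr.
  by rewrite (_ : t * n + t = n.+1 * t + 0) ?abacus_mem //; nia.
have N0 : N 0 = n by move: below; rewrite abacus_mem //; lia.
have half r : 0 < r < t -> N (t - r) < n -> 2 * n <= N r + N (t - r).
  move=> /andP[r0 rt] low; set m := N (t - r).
  (* Mirror the first gap [m * t + (t - r)] of runner [t - r]. *)
  have /mirror : 0 < (n - m.+1) * t + r <= t * n by apply/andP; split; nia.
  rewrite (_ : t * n - _ = m * t + (t - r)); last by nia.
  rewrite (_ : t * n + _ = (2 * n - m.+1) * t + r); last by nia.
  by rewrite !abacus_mem ?ltnn; lia.
split=> // r rt; case: (ltnP (N (t - r)) n) => [|hi]; first exact: half.
case: (ltnP (N r) n) => [lo|]; last lia.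
by have := half (t - r); rewrite subKn; lia.
Qed.

Lemma balanced_abacus : N 0 = n -> (forall r, 0 < r < t -> 2 * n <= N r + N (t - r)) ->
  ~~ inB (t * n) /\
  (forall d, 0 < d <= t * n -> ~~ inB (t * n - d) -> inB (t * n + d)).
Proof.
move=> N0 pairs; split; first by rewrite -[t * n]addn0 mulnC abacus_mem // N0 ltnn.
move=> d /andP[d0 dtn]; have dE := divn_eq d t; rewrite dE.
set q := d %/ t in dE *; set r := d %% t in dE *; have rt : r < t by rewrite ltn_pmod.
case: (posnP r) => [r0|r0].
  rewrite r0 (_ : t * n - _ = (n - q) * t + 0) ?abacus_mem ?N0 //; last nia.
  by move=> /negP[]; nia.
rewrite (_ : t * n - _ = (n - q - 1) * t + (t - r)); last nia.
rewrite (_ : t * n + _ = (n + q) * t + r); last nia.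
have qn : q < n by nia.
by have := pairs r; rewrite r0 rt !abacus_mem //= => [/(_ isT)|]; lia.
Qed.

Lemma abacusP : 0 < n ->
  (~~ inB (t * n) /\
   forall d, 0 < d <= t * n -> ~~ inB (t * n - d) -> inB (t * n + d)) <->
  (N 0 = n /\ forall r, 0 < r < t -> 2 * n <= N r + N (t - r)).
Proof. by move=> n0; split=> [[]|[]]; [apply: abacus_balanced | apply: balanced_abacus]. Qed.

End Abacus.

Lemma leq_sum_subset (s s' : seq nat) (F : nat -> nat) : uniq s -> uniq s' ->
  {subset s <= s'} -> \sum_(i <- s) F i <= \sum_(i <- s') F i.
Proof. exact: (@uniq_sub_le_big _ addn leq leqnn (fun x y => leq_addr y x)). Qed.

Lemma symmetric_sum_eq2 (e : nat -> nat) t :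
  (forall r, 0 < r < t -> e (t - r) = e r) -> (~~ odd t -> ~~ odd (e (t %/ 2))) ->
  \sum_(1 <= r < t) e r = 2 ->
  exists i0, 1 <= i0 <= t %/ 2 /\ forall i, 1 <= i <= t %/ 2 ->
    e i = (if i == i0 then 1 + (~~ odd t && (i0 == t %/ 2)) else 0).
Proof.
move=> esym epar esum.
have le2 s : uniq s -> all (fun r => 0 < r < t) s -> \sum_(r <- s) e r <= 2.
  move=> us /allP st; rewrite -esum leq_sum_subset ?iota_uniq // => r /st.
  by rewrite mem_index_iota.
have [r1 r1t er1] : exists2 r1, 0 < r1 < t & 0 < e r1.
  have /hasP[r] : has (fun r => 0 < e r) (index_iota 1 t).
    apply: contraT => /hasPn e0; move: esum; rewrite big1_seq // => r /andP[_ /e0].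
    by rewrite lt0n negbK => /eqP.
  by rewrite mem_index_iota; exists r.
(* The weight [2] sits on the orbit [{i0, t - i0}] of [r |-> t - r]. *)
pose i0 := minn r1 (t - r1).
have i0t : 0 < i0 < t by lia.
have ei0 : 0 < e i0 by rewrite /i0 /minn; case: ifP => _; rewrite ?esym.
exists i0; split=> [|i it2]; first lia.
have it : 0 < i < t by lia.
case: (eqVneq i0.*2 t) => [mid|side].
  have half : t %/ 2 = i0 by lia.
  have e2 : e i0 = 2.
    have := epar; rewrite half -mid odd_double => /(_ isT).
    by have := le2 [:: i0]; rewrite big_seq1 /= i0t => /(_ isT isT); lia.
  rewrite half eqxx -mid odd_double /=; case: eqVneq => [->|ne] //.
  by have := le2 [:: i; i0]; rewrite !big_cons big_nil /= !inE ne it i0t => /(_ isT isT); lia.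
have i0i0' : i0 != t - i0 by lia.
have i0t' : 0 < t - i0 < t by lia.
have e1 : e i0 = 1.
  have := le2 [:: i0; t - i0]; rewrite !big_cons big_nil esym //= !inE i0i0' i0t i0t'.
  by move=> /(_ isT isT); lia.
case: eqVneq => [->|ne]; first by rewrite e1; lia.
have ii0' : i != t - i0 by lia.
have := le2 [:: i; i0; t - i0]; rewrite !big_cons big_nil esym //= !inE.
by rewrite negb_or ne ii0' i0i0' it i0t i0t' => /(_ isT isT); lia.
Qed.

Lemma residue_pairsP t n (N : nat -> nat) : 1 < t -> \sum_(0 <= r < t) N r = t * n + 1 ->
  (exists i0, [/\ 1 <= i0 <= t %/ 2, N 0 = n &
     forall i, 1 <= i <= t %/ 2 -> N i + N (t - i) =
       (if i == i0 then 2 * n + 1 + (~~ odd t && (i0 == t %/ 2)) else 2 * n)]) <->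
  N 0 = n /\ forall r, 0 < r < t -> 2 * n <= N r + N (t - r).
Proof.
move=> t1 sumN; split=> [[i0 [_ N0 pairs]]|[N0 pairs]].
  have {}pairs i : 1 <= i <= t %/ 2 -> 2 * n <= N i + N (t - i).
    by move=> /pairs ->; case: ifP; lia.
  split=> // r rt; case: (leqP r (t %/ 2)) => rh; first by apply: pairs; lia.
  have h : 1 <= t - r <= t %/ 2 by lia.
  by have := pairs _ h; rewrite subKn; lia.
pose e r := N r + N (t - r) - 2 * n.
have eE r : 0 < r < t -> N r + N (t - r) = e r + 2 * n.
  by move=> /pairs; rewrite /e; lia.
have esym r : 0 < r < t -> e (t - r) = e r by move=> rt; rewrite /e subKn; lia.
have epar : ~~ odd t -> ~~ odd (e (t %/ 2)).
  by move=> ev; rewrite /e (_ : t - t %/ 2 = t %/ 2) -?addnn -?doubleMr ?odd_double; lia.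
have esum : \sum_(1 <= r < t) e r = 2.
  have mirror : \sum_(1 <= r < t) N (t - r) = \sum_(1 <= r < t) N r.
    by rewrite big_nat_rev; apply: eq_big_nat => r rt; rewrite add1n subSS subKn //; lia.
  have tot : \sum_(1 <= r < t) (e r + 2 * n) = \sum_(1 <= r < t) (N r + N (t - r)).
    by apply: eq_big_nat => r rt; rewrite eE.
  rewrite [LHS]big_split [RHS]big_split /= mirror sum_nat_const_nat in tot.
  by move: sumN; rewrite big_ltn 1?ltnW // N0; nia.
have [i0 [i0t2 ei0]] := symmetric_sum_eq2 esym epar esum.
exists i0; split=> // i it2; rewrite eE ?ei0 //; last lia.
by case: eqP; lia.
Qed.

Theorem corollary3p7 (t n : nat) (la : seq nat) :
  2 <= t -> 1 <= n -> is_partition la -> size la <= t * n + 1 ->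
  forall c : seq nat, tcore_of t la c ->
  ((exists i0, [/\ 1 <= i0 <= t %/ 2,
       nres t la (t * n + 1) 0 = n &
       forall i, 1 <= i <= t %/ 2 ->
         nres t la (t * n + 1) i + nres t la (t * n + 1) (t - i) =
         (if i == i0 then 2 * n + 1 + (~~ odd t && (i0 == t %/ 2))
          else 2 * n)])
   <->
   (exists k, 1 <= k <= rk c /\ asymmetric 1 0 k c)).
Proof.
move=> t2 n1 pla sla c [hooks core]; have t0 : 0 < t by lia.
have [pc sc nresE] := hooks_removed_nres t0 hooks pla sla.
set N := nres t la (t * n + 1).
have sumN : \sum_(0 <= r < t) N r = t * n + 1.
  under eq_bigr do rewrite /N nresE nres_beads.
  by rewrite sum_count_mod // size_beads.
have memB x : (x \in beads c (t * n + 1)) = (x %/ t < N (x %% t)).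
  rewrite /N nresE nres_beads (mem_down_closed t0) ?uniq_beads // => y.
  exact: tcore_beads_closed.
rewrite (residue_pairsP t2 sumN) -(abacusP (inB := fun x => x \in _) t0 memB n1) /=.
by rewrite addn1 in sc *; apply: iff_sym; apply: asymmetric_beadsP.
Qed.
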